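(* Let $(B,\lfloor\cdot,\cdot\rfloor,\|\cdot\|)$ be an SSDB space, $q(b):=\tfrac12\lfloor b,b\rfloor$, $g_0:=\tfrac12\|\cdot\|^2$. Then: (a) if $f$ is a BC--function on $B$ then ${\cal P}_q(f)-{\cal N}_q(g_0)=B$; (b) if $A$ is a $q$--positive subset of $B$ with $A-{\cal N}_q(g_0)=B$, then $A$ is maximally $q$--positive; (c) if $f$ is a BC--function on $B$ then ${\cal P}_q(f)$ is maximally $q$--positive and ${\cal P}_q(f^@)={\cal P}_q(f)$; (d) if $A$ is a $q$--positive subset of $B$, then $A$ is maximally $q$--positive if and only if $A-{\cal N}_q(g_0)=B$.
   Context: An SSDB space is a triple $(B,\lfloor\cdot,\cdot\rfloor,\|\cdot\|)$ where $B$ is a nonzero real vector space, $\lfloor\cdot,\cdot\rfloor$ a symmetric bilinear form on $B$, $(B,\|\cdot\|)$ a Banach space, and there is a linear isometry $\iota$ of $B$ onto its dual $B^*$ with $\langle b,\iota(c)\rangle=\lfloor b,c\rfloor$ for all $b,c$. For proper convex $f\colon B\to\,]{-}\infty,\infty]$, $f^@(c):=\sup_{b\in B}[\lfloor b,c\rfloor-f(b)]$. A BC--function is a proper convex $f$ with $f^@(b)\ge f(b)\ge q(b)$ for all $b$. ${\cal P}_q(h):=\{b\colon h(b)=q(b)\}$ for $h\ge q$, ${\cal N}_q(h):=\{b\colon h(b)=-q(b)\}$ for $h\ge -q$. $A$ is $q$--positive if $A\ne\emptyset$ and $q(b-c)\ge0$ for all $b,c\in A$; maximally $q$--positive if moreover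 it is not properly contained in another $q$--positive set. *)

From HB Require Import structures.
From mathcomp Require Import all_boot all_order all_algebra.
From mathcomp Require Import all_classical all_reals all_analysis.
Set Implicit Arguments. Unset Strict Implicit. Unset Printing Implicit Defensive.
Import Order.TTheory GRing.Theory Num.Theory.
Import numFieldNormedType.Exports.
Local Open Scope classical_set_scope.
Local Open Scope ring_scope.

Section Defs.
Variables (R : realType) (B : completeNormedModType R).

Definition symmetric_bilinear (bf : B -> B -> R) : Prop :=
  (forall b c, bf b c = bf c b) /\
  (forall (s t : R) (x y c : B), bf (s *: x + t *: y) c = s * bf x c + t * bf y c).

Definition linear_functional (phi : B -> R) : Prop :=
  forall (s t : R) (x y : B), phi (s *: x + t *: y) = s * phi x + t * phi y.

(* SSDB space: B nonzero Banach space (given by B : completeNormedModType R),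
   bf symmetric bilinear, and c |-> bf . c is a linear isometry of B ONTO B^*,
   where B^* carries the operator norm.  The isometry condition says that the
   operator norm sup_{||b||<=1} |bf b c| of the functional bf . c equals ||c||. *)
Definition SSDB (bf : B -> B -> R) : Prop :=
  [/\ exists b : B, b != 0,
      symmetric_bilinear bf,
      (forall c : B,
          (forall b : B, `|bf b c| <= `|b| * `|c|) /\
          (forall e : R, 0 < e -> exists b : B, `|b| <= 1 /\ `|c| - e < `|bf b c|))
    &
      (forall phi : B -> R, linear_functional phi -> continuous phi ->
          exists c : B, forall b : B, phi b = bf b c)].

Definition qf (bf : B -> B -> R) (b : B) : R := 2^-1 * bf b b.
Definition g0 (b : B) : R := 2^-1 * `|b| ^+ 2.

Definition proper_convex (f : B -> \bar R) : Prop :=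
  [/\ forall b, f b != -oo%E,
      exists b, f b != +oo%E
    & forall (x y : B) (t : R), 0 < t < 1 ->
        (f (t *: x + (1 - t) *: y)%R <= t%:E * f x + (1 - t)%:E * f y)%E].

Definition fat (bf : B -> B -> R) (f : B -> \bar R) (c : B) : \bar R :=
  ereal_sup [set ((bf b c)%:E - f b)%E | b in [set: B]].

Definition BC_function (bf : B -> B -> R) (f : B -> \bar R) : Prop :=
  proper_convex f /\
  (forall b, (fat bf f b >= f b)%E /\ (f b >= (qf bf b)%:E)%E).

Definition Pq (bf : B -> B -> R) (h : B -> \bar R) : set B :=
  [set b | h b = (qf bf b)%:E].
Definition Nq (bf : B -> B -> R) (h : B -> R) : set B :=
  [set b | h b = - qf bf b].

Definition diff_is_all (A C : set B) : Prop :=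
  forall b : B, exists a, exists c, [/\ A a, C c & b = a - c].

Definition q_positive (bf : B -> B -> R) (A : set B) : Prop :=
  A !=set0 /\ (forall b c, A b -> A c -> 0 <= qf bf (b - c)).

Definition max_q_positive (bf : B -> B -> R) (A : set B) : Prop :=
  q_positive bf A /\
  (forall A' : set B, q_positive bf A' -> A `<=` A' -> A' = A).

End Defs.

From HB Require Import structures.
From mathcomp Require Import all_boot all_order all_algebra.
From mathcomp Require Import all_classical all_reals all_analysis.
From mathcomp Require Import ring lra.
Import Order.TTheory GRing.Theory Num.Theory.
Import numFieldNormedType.Exports.
Local Open Scope classical_set_scope.
Local Open Scope ring_scope.

(* Given a BC-function f and c in B, the convex
   function F y := f (y + c) - bf y c - q c satisfies F >= -g0, so its infimal
   convolution with g0 is a finite convex function that is nonnegative at 0.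
   A Zorn argument on graphs of partial linear minorants (Hahn-Banach in the
   Mazur-Orlicz form) gives a linear functional below it; the functional is
   bounded on the unit ball, hence equal to bf _ d by the SSDB surjectivity.
   Since g0 is its own conjugate with respect to bf, this yields
   bf y d + g0 d <= F y, an affine minorant of f which, together with
   q <= f <= f^@, forces d + c in P_q(f) and d in N_q(g0).
   For (b), a point a - n of a q-positive extension of A has q n >= 0, and
   g0 n = - q n then forces n = 0.  Part (c) follows from (a), (b) and the
   convexity of f along segments, and (d) from (a) applied to
   Phi_A(b) := sup_(a in A) [bf a b - q a], which for maximally q-positive A
   is a BC-function with P_q(Phi_A) = A. *)

Section ConvexLinearMinorant.
Context {R : realType} {V : lmodType R}.

Definition convex_fun (k : V -> R) : Prop :=
  forall x y (l : R), 0 < l < 1 ->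
    k (l *: x + (1 - l) *: y) <= l * k x + (1 - l) * k y.

Definition linear_fun (psi : V -> R) : Prop :=
  forall (s t : R) x y, psi (s *: x + t *: y) = s * psi x + t * psi y.

Variable k : V -> R.

(* A subspace of [V * R] below the graph of [k]; it is the graph of a linear
   functional on its projection to [V] (lemma [graph_below_fun]). *)
Definition graph_below (G : set (V * R)) : Prop :=
  (forall p p' a, G p -> G p' -> G (p.1 + a *: p'.1, p.2 + a * p'.2)) /\
  (forall p, G p -> p.2 <= k p.1).

Lemma graph_below0 {G p} : graph_below G -> G p -> G (0, 0).
Proof.
move=> [GD _] Gp; have := GD p p (-1) Gp Gp.
by rewrite scaleN1r mulN1r !subrr.
Qed.

Lemma graph_below_fun {G x r r'} : graph_below G -> G (x, r) -> G (x, r') -> r = r'.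
Proof.
move=> Gbelow Gr Gr'; have [GD Gk] := Gbelow.
have G0 := graph_below0 Gbelow Gr.
have Gd := GD _ _ (-1) Gr Gr'; rewrite /= scaleN1r mulN1r subrr in Gd.
apply/eqP; rewrite -subr_eq0; apply/negP => /negP rr'.
have := Gk _ (GD _ _ ((k 0 + 1) / (r - r')) G0 Gd).
by rewrite /= scaler0 addr0 add0r mulfVK //; lra.
Qed.

Hypothesis k_convex : convex_fun k.

Lemma graph_below_slope_le {G} v {x1 r1 x2 r2 s t} :
  graph_below G -> G (x1, r1) -> G (x2, r2) -> 0 < s -> 0 < t ->
  (r1 - k (x1 - s *: v)) / s <= (k (x2 + t *: v) - r2) / t.
Proof.
move=> Gbelow G1 G2 s0 t0; have [GD Gk] := Gbelow.
have G0 := graph_below0 Gbelow G1.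
have st0 : 0 < s + t by rewrite addr_gt0.
set l := t / (s + t).
have l01 : 0 < l < 1.
  by rewrite divr_gt0 //= ltr_pdivrMr // mul1r ltrDr.
have l1 : 1 - l = s / (s + t) by rewrite /l; field; rewrite lt0r_neq0.
have := Gk _ (GD _ _ (1 - l) (GD _ _ l G0 G1) G2); rewrite /= !add0r.
have -> : l *: x1 + (1 - l) *: x2 = l *: (x1 - s *: v) + (1 - l) *: (x2 + t *: v).
  rewrite scalerBr scalerDr !scalerA addrACA.
  have -> : (1 - l) * t = l * s by rewrite l1 /l; field; rewrite lt0r_neq0.
  by rewrite addNr addr0.
move=> /le_trans /(_ (k_convex _ _ _ l01)).
set K1 := k (x1 - s *: v); set K2 := k (x2 + t *: v) => H.
rewrite ler_pdivrMr // mulrAC ler_pdivlMr //.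
have := ler_wpM2l (ltW st0) H.
rewrite !mulrDr !mulrA l1 !(mulrC (s + t)) /l !divfK ?mulfK ?lt0r_neq0 //.
lra.
Qed.

Definition graph_adjoin (G : set (V * R)) v a : set (V * R) :=
  [set z | exists x r t, G (x, r) /\ z = (x + t *: v, r + t * a)].

Lemma graph_below_adjoin G v a :
  graph_below G ->
  (forall x r s, G (x, r) -> 0 < s -> (r - k (x - s *: v)) / s <= a) ->
  (forall x r t, G (x, r) -> 0 < t -> a <= (k (x + t *: v) - r) / t) ->
  graph_below (graph_adjoin G v a).
Proof.
move=> [GD Gk] aL aU; split.
- move=> _ _ b [x1 [r1 [t1 [G1 ->]]]] [x2 [r2 [t2 [G2 ->]]]] /=.
  exists (x1 + b *: x2), (r1 + b * r2), (t1 + b * t2); split; first exact: GD G1 G2.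
  congr pair; last by ring.
  by rewrite scalerDr !scalerA scalerDl -!addrA; congr (_ + _); rewrite addrCA.
- move=> _ [x [r [t [Gxr ->]]]] /=.
  case: (ltgtP t 0) => [t_lt0|t_gt0|->]; last first.
  + by rewrite scale0r mul0r !addr0; exact: Gk Gxr.
  + by have := aU _ _ _ Gxr t_gt0; rewrite ler_pdivlMr // => ?; lra.
  + have Nt_gt0 : 0 < - t by rewrite oppr_gt0.
    have := aL _ _ _ Gxr Nt_gt0.
    by rewrite scaleNr opprK ler_pdivrMr // => ?; lra.
Qed.

Lemma graph_below_extend {G v} :
  graph_below G -> G !=set0 -> (forall r, ~ G (v, r)) ->
  exists G', graph_below G' /\ G `<` G'.
Proof.
move=> Gbelow [p0 Gp0] Gv.
have G0 := graph_below0 Gbelow Gp0.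
pose L := [set l | exists x r s, [/\ G (x, r), 0 < s & l = (r - k (x - s *: v)) / s]].
pose U := [set u | exists x r t, [/\ G (x, r), 0 < t & u = (k (x + t *: v) - r) / t]].
have LU l u : L l -> U u -> l <= u.
  move: l u => _ _ [x1 [r1 [s [G1 s0 ->]]]] [x2 [r2 [t [G2 t0 ->]]]].
  exact: graph_below_slope_le _ Gbelow G1 G2 s0 t0.
have [l0 Ll0] : L !=set0 by exists ((0 - k (0 - 1 *: v)) / 1), 0, 0, 1.
have [u0 Uu0] : U !=set0 by exists ((k (0 + 1 *: v) - 0) / 1), 0, 0, 1.
have L_sup : has_sup L by split; [exists l0 | exists u0 => l Ll; exact: LU].
exists (graph_adjoin G v (sup L)); split; last split.
- apply: graph_below_adjoin => // [x r s Gxr s0|x r t Gxr t0].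
    by apply: sup_upper_bound => //; exists x, r, s.
  by apply: ge_sup; [exists l0 | move=> l Ll; apply: LU Ll _; exists x, r, t].
- by case=> x r Gxr; exists x, r, 0; rewrite scale0r mul0r !addr0.
- move=> /(_ (v, sup L)) GvL; apply: (Gv (sup L)); apply: GvL.
  by exists 0, 0, 1; rewrite scale1r mul1r !add0r.
Qed.

Lemma graph_below_bigcup (F : set (set (V * R))) :
  F `<=` graph_below -> total_on F subset -> graph_below (\bigcup_(X in F) X).
Proof.
move=> Fbelow Ftot; split.
- move=> p p' a [X FX Xp] [Y FY Yp'].
  have [XY|YX] := Ftot X Y FX FY.
  + by exists Y => //; apply: (Fbelow Y FY).1 => //; exact: XY.
  + by exists X => //; apply: (Fbelow X FX).1 => //; exact: YX.
- by move=> p [X FX Xp]; exact: (Fbelow X FX).2.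
Qed.

(* A Zorn-maximal [graph_below] is defined everywhere by [graph_below_extend]. *)
Lemma convex_linear_minorant : 0 <= k 0 ->
  exists psi : V -> R, linear_fun psi /\ forall x, psi x <= k x.
Proof.
move=> k0_ge0.
have [G [Gbelow Gmax]] := Zorn_bigcup graph_below_bigcup.
have G0 : G (0, 0).
  apply: contrapT => nG0; apply: (Gmax [set (0, 0)]).
  - split=> [z Gz|/(_ (0, 0) erefl) //].
    by case: nG0; exact: graph_below0 Gbelow Gz.
  - by split=> [p p' a -> -> /=|p ->]; rewrite ?scaler0 ?mulr0 ?addr0.
have Gdom x : exists r, G (x, r).
  apply: contrapT => nGx.
  have [G' [G'below GG']] := graph_below_extend Gbelow (ex_intro _ _ G0)
    (fun r Gxr => nGx (ex_intro _ r Gxr)).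
  exact: Gmax GG' G'below.
pose psi x := xget 0 [set r | G (x, r)].
have Gpsi x : G (x, psi x) by exact: xgetPex (Gdom x).
exists psi; split=> [s t x y|x]; last exact: Gbelow.2 _ (Gpsi x).
have := Gbelow.1 _ _ t (Gbelow.1 _ _ s G0 (Gpsi x)) (Gpsi y); rewrite /= !add0r.
exact: graph_below_fun (Gpsi _).
Qed.

End ConvexLinearMinorant.

Section LinearNormed.
Context {R : realType} {V : normedModType R}.
Context {psi : V -> R} {M : R}.
Hypotheses (psi_lin : linear_fun psi) (psi_le : forall x, `|x| <= 1 -> psi x <= M).

Lemma linear_fun_scale a x : psi (a *: x) = a * psi x.
Proof. by have := psi_lin a 0 x x; rewrite scale0r addr0 mul0r addr0. Qed.

Lemma linear_fun_normr_le x : `|psi x| <= M * `|x|.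
Proof.
have [->|x_neq0] := eqVneq x 0.
  have := linear_fun_scale 0 0; rewrite scale0r mul0r => ->.
  by rewrite !normr0 mulr0.
set u := `|x|^-1 *: x.
have nu : `|u| = 1 by rewrite normrZ normfV normr_id mulVf ?normr_eq0.
have -> : x = `|x| *: u by rewrite /u scalerA mulfV ?normr_eq0 // scale1r.
rewrite linear_fun_scale normrM normrZ normr_id nu mulr1 mulrC ler_wpM2r //.
have u_le1 : `|u| <= 1 by rewrite nu.
have := psi_le u u_le1; have := psi_le (- u).
by rewrite normrN u_le1 -scaleN1r linear_fun_scale => /(_ isT); rewrite ler_norml; lra.
Qed.

Lemma linear_fun_bounded_continuous : continuous psi.
Proof.
move=> x; have M1_gt0 : 0 < M + 1.
  have := psi_le 0; rewrite normr0 ler01 -(scale0r (0 : V)).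
  by rewrite linear_fun_scale mul0r => /(_ isT) M_ge0; lra.
apply/(@cvgrPdist_lt _ _ _ (nbhs x)) => e e_gt0; near=> z.
have -> : psi x - psi z = psi (x - z).
  by have := psi_lin 1 (-1) x z; rewrite scale1r scaleN1r mul1r mulN1r.
apply: le_lt_trans (linear_fun_normr_le _) _.
apply: (@le_lt_trans _ _ ((M + 1) * `|x - z|)); first by rewrite ler_wpM2r ?lerDl.
rewrite -ltr_pdivlMl //.
near: z; apply: cvgr_dist_lt; [exact: cvg_id | by rewrite mulr_gt0 ?invr_gt0].
Unshelve. all: by end_near. Qed.

End LinearNormed.

Lemma ler_subM01 {R : realType} (x y z : R) :
  (forall t, 0 < t < 1 -> x <= y - t * z) -> x <= y.
Proof.
move=> xle; apply/ler_addgt0Pr => e e_gt0.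
have d_gt0 : 0 < e + e + `|z| by have := normr_ge0 z; lra.
set t := e / (e + e + `|z|).
have t_gt0 : 0 < t by rewrite divr_gt0.
have t_lt1 : t < 1 by rewrite /t ltr_pdivrMr // mul1r; have := normr_ge0 z; lra.
have := xle t; rewrite t_gt0 t_lt1 => /(_ isT).
have tz : - (t * z) <= t * `|z|.
  rewrite -mulrN; apply: ler_wpM2l; [exact: ltW | rewrite -normrN; exact: ler_norm].
have : t * `|z| <= e by rewrite /t mulrAC ler_pdivrMr //; nra.
lra.
Qed.

Lemma lee_EFin_subr {R : realType} (x y : R) (e : \bar R) :
  ((x - y)%:E <= e)%E -> (x%:E - e <= y%:E)%E.
Proof.
case: e => [r||] //=; last by rewrite addeNy leNye.
by rewrite -EFinB !lee_fin; lra.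
Qed.

Section Bilinear.
Context {R : realType} {B : completeNormedModType R} {bf : B -> B -> R}.
Hypothesis hbf : symmetric_bilinear bf.
Local Notation q := (qf bf).

Lemma bfC x y : bf x y = bf y x. Proof. by case: hbf. Qed.

Lemma bfDl x y c : bf (x + y) c = bf x c + bf y c.
Proof. by case: hbf => _ bfl; have := bfl 1 1 x y c; rewrite !scale1r !mul1r. Qed.

Lemma bfZl a x c : bf (a *: x) c = a * bf x c.
Proof. by case: hbf => _ bfl; have := bfl a 0 x x c; rewrite scale0r addr0 mul0r addr0. Qed.

Lemma bfNl x c : bf (- x) c = - bf x c.
Proof. by rewrite -scaleN1r bfZl mulN1r. Qed.

Lemma bfBl x y c : bf (x - y) c = bf x c - bf y c.
Proof. by rewrite bfDl bfNl. Qed.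

Lemma bfDr x y c : bf c (x + y) = bf c x + bf c y.
Proof. by rewrite bfC bfDl !(bfC c). Qed.

Lemma bfZr a x c : bf c (a *: x) = a * bf c x.
Proof. by rewrite bfC bfZl bfC. Qed.

Lemma bfBr x y c : bf c (x - y) = bf c x - bf c y.
Proof. by rewrite bfC bfBl !(bfC c). Qed.

Lemma qf0 : q 0 = 0.
Proof. by rewrite /qf -(scale0r (0 : B)) bfZl mul0r mulr0. Qed.

Lemma qfD x y : q (x + y) = q x + q y + bf x y.
Proof. by rewrite /qf bfDl !bfDr (bfC y x); field. Qed.

Lemma qfB x y : q (x - y) = q x + q y - bf x y.
Proof. by rewrite /qf bfBl !bfBr (bfC y x); field. Qed.

Lemma qfZ a x : q (a *: x) = a ^+ 2 * q x.
Proof. by rewrite /qf bfZl bfZr; ring. Qed.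

Lemma qfN x : q (- x) = q x.
Proof. by rewrite -scaleN1r qfZ expr2 mulN1r opprK mul1r. Qed.

Lemma q_positive_setU1 A b : q_positive bf A ->
  (forall a, A a -> 0 <= q (b - a)) -> q_positive bf (A `|` [set b]).
Proof.
move=> [[a0 Aa0] qA] qb; split; first by exists a0; left.
move=> x y [Ax|->] [Ay|->]; first exact: qA.
- by rewrite -opprB qfN; exact: qb.
- exact: qb.
- by rewrite subrr qf0.
Qed.

Lemma diff_is_all_max_q_positive A : q_positive bf A ->
  diff_is_all A (Nq bf (@g0 R B)) -> max_q_positive bf A.
Proof.
move=> qA AN; split=> // A' qA' AA'; apply/seteqP; split=> [b A'b|//].
have [a [n [Aa Nn eb]]] := AN b; subst b.
have := qA'.2 _ _ A'b (AA' _ Aa); rewrite addrAC subrr add0r qfN.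
move: Nn; rewrite /Nq /g0 /= => Nn q_ge0.
have : `|n| ^+ 2 = 0 by have := sqr_ge0 `|n|; lra.
by move/eqP; rewrite sqrf_eq0 normr_eq0 => /eqP ->; rewrite subr0.
Qed.

End Bilinear.

Lemma g0_convex {R : realType} {B : completeNormedModType R} : convex_fun (@g0 R B).
Proof.
rewrite /convex_fun /g0 => x y l /andP[l_gt0 l_lt1].
have l_ge0 := ltW l_gt0; have l1_ge0 : 0 <= 1 - l by rewrite subr_ge0 ltW.
have tri : `|l *: x + (1 - l) *: y| <= l * `|x| + (1 - l) * `|y|.
  by apply: le_trans (ler_normD _ _) _; rewrite !normrZ !ger0_norm.
have : `|l *: x + (1 - l) *: y| ^+ 2 <= (l * `|x| + (1 - l) * `|y|) ^+ 2.
  by rewrite lerXn2r ?nnegrE ?addr_ge0 ?mulr_ge0.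
have : 0 <= l * (1 - l) * (`|x| - `|y|) ^+ 2.
  by apply: mulr_ge0; [exact: mulr_ge0 | exact: sqr_ge0].
rewrite !expr2; nra.
Qed.

Lemma half_itv01 {R : realType} : 0 < (2^-1 : R) < 1.
Proof. by rewrite invr_gt0 ltr0n invf_lt1 ?ltr1n ?ltr0n. Qed.

Lemma subr_half {R : realType} : 1 - 2^-1 = 2^-1 :> R.
Proof. by field. Qed.

Lemma SSDB_symmetric_bilinear {R : realType} {B : completeNormedModType R}
  {bf : B -> B -> R} : SSDB bf -> symmetric_bilinear bf.
Proof. by case. Qed.

Section SSDB.
Context {R : realType} {B : completeNormedModType R} {bf : B -> B -> R}.
Hypothesis hS : SSDB bf.
Let hbf : symmetric_bilinear bf := SSDB_symmetric_bilinear hS.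
Local Notation q := (qf bf).

Lemma neg_g0_le_q b : - g0 b <= q b.
Proof.
case: hS => _ _ bf_norm _; have := (bf_norm b).1 b.
by rewrite /qf /g0 ler_norml expr2 => /andP[bb_ge _]; lra.
Qed.

Lemma bf_norming d {e} : 0 < e -> exists b, `|b| <= 1 /\ `|d| - e < bf b d.
Proof.
case: hS => _ _ bf_norm _ /((bf_norm d).2) [b [b_le1 bd_gt]].
have [bd_ge0|bd_lt0] := lerP 0 (bf b d).
  by exists b; rewrite -(ger0_norm bd_ge0).
by exists (- b); rewrite normrN (bfNl hbf) -(ltr0_norm bd_lt0).
Qed.

Lemma g0_le_conjugate d {e} : 0 < e -> exists z, g0 d - e < bf z d - g0 z.
Proof.
move=> e_gt0; have nd1_gt0 : 0 < `|d| + 1 by rewrite ltr_wpDl.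
set e' := e / (`|d| + 1).
have [b [b_le1 bd_gt]] := bf_norming d (divr_gt0 e_gt0 nd1_gt0).
exists (`|d| *: b); rewrite (bfZl hbf) /g0 normrZ normr_id.
have : `|d| * (`|d| - e') <= `|d| * bf b d by rewrite ler_wpM2l // ltW.
have : (`|d| * `|b|) ^+ 2 <= `|d| ^+ 2.
  by rewrite exprMn ler_piMr ?sqr_ge0 // expr_le1.
have : e' * `|d| < e.
  by rewrite /e' mulrAC ltr_pdivrMr // ltr_pM2l // ltrDl.
rewrite !expr2 mulrBr (mulrC e'); lra.
Qed.

Lemma linear_fun_bf_rep psi M : linear_fun psi ->
  (forall x, `|x| <= 1 -> psi x <= M) -> exists d, forall x, psi x = bf x d.
Proof.
move=> psi_lin psi_le; case: hS => _ _ _ onto.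
exact: onto psi_lin (linear_fun_bounded_continuous psi_lin psi_le).
Qed.

Section InfConvolution.
Context (D : set B) (F : B -> R) {y0 : B}.
Hypothesis Dy0 : D y0.
Hypothesis F_convex : forall x y l, D x -> D y -> 0 < l < 1 ->
  D (l *: x + (1 - l) *: y) /\ F (l *: x + (1 - l) *: y) <= l * F x + (1 - l) * F y.
Hypothesis F_g0_ge0 : forall y, D y -> 0 <= F y + g0 y.

Definition infconv x := inf [set F y + g0 (y - x) | y in D].

Lemma infconv_lbound x y : D y -> - (F y0 + g0 (y0 + x)) <= F y + g0 (y - x).
Proof.
move=> Dy; have [Dm Fm] := F_convex _ _ _ Dy Dy0 half_itv01.
have := g0_convex (y - x) (y0 + x) _ half_itv01.
have -> : 2^-1 *: (y - x) + (1 - 2^-1) *: (y0 + x) = 2^-1 *: y + (1 - 2^-1) *: y0.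
  by rewrite subr_half -!scalerDr addrACA addNr addr0.
have := F_g0_ge0 _ Dm; rewrite subr_half in Fm *; lra.
Qed.

Lemma infconv_has_inf x : has_inf [set F y + g0 (y - x) | y in D].
Proof.
split; first by exists (F y0 + g0 (y0 - x)), y0.
by exists (- (F y0 + g0 (y0 + x))) => _ [y Dy <-]; exact: infconv_lbound.
Qed.

Lemma infconv_le x {y} : D y -> infconv x <= F y + g0 (y - x).
Proof. by move=> Dy; apply: (ge_inf (infconv_has_inf x).2); exists y. Qed.

Lemma infconv0_ge0 : 0 <= infconv 0.
Proof.
apply: lb_le_inf; first exact: (infconv_has_inf 0).1.
by move=> _ [y Dy <-]; rewrite subr0; exact: F_g0_ge0.
Qed.

Lemma infconv_convex : convex_fun infconv.
Proof.
move=> x1 x2 l l01; have /andP[l_gt0 l_lt1] := l01.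
have l1_gt0 : 0 < 1 - l by rewrite subr_gt0.
set z := l *: x1 + (1 - l) *: x2.
have h_le y1 y2 : D y1 -> D y2 ->
    infconv z <= l * (F y1 + g0 (y1 - x1)) + (1 - l) * (F y2 + g0 (y2 - x2)).
  move=> D1 D2; have [Dm Fm] := F_convex _ _ _ D1 D2 l01.
  apply: le_trans (infconv_le _ Dm) _.
  have := g0_convex (y1 - x1) (y2 - x2) _ l01.
  have -> : l *: (y1 - x1) + (1 - l) *: (y2 - x2) = l *: y1 + (1 - l) *: y2 - z.
    by rewrite /z !scalerBr opprD addrACA.
  lra.
have h_le1 y2 : D y2 -> (infconv z - (1 - l) * (F y2 + g0 (y2 - x2))) / l <= infconv x1.
  move=> D2; apply: lb_le_inf; first exact: (infconv_has_inf x1).1.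
  by move=> _ [y1 D1 <-]; rewrite ler_pdivrMr //; have := h_le _ _ D1 D2; lra.
have : (infconv z - l * infconv x1) / (1 - l) <= infconv x2.
  apply: lb_le_inf; first exact: (infconv_has_inf x2).1.
  move=> _ [y2 D2 <-]; rewrite ler_pdivrMr //.
  by have := h_le1 _ D2; rewrite ler_pdivrMr //; lra.
by rewrite ler_pdivrMr //; lra.
Qed.

Lemma exists_bf_g0_le : exists d, forall y, D y -> bf y d + g0 d <= F y.
Proof.
have [psi [psi_lin psi_le]] := convex_linear_minorant _ infconv_convex infconv0_ge0.
have [d psi_d] : exists d, forall x, psi x = bf x d.
  apply: (@linear_fun_bf_rep _ (F y0 + 2^-1 * (`|y0| + 1) ^+ 2) psi_lin) => x x_le1.
  apply: le_trans (psi_le x) (le_trans (infconv_le x Dy0) _).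
  rewrite lerD2l /g0 ler_wpM2l ?invr_ge0 ?ler0n // lerXn2r ?nnegrE ?addr_ge0 //.
  by apply: le_trans (ler_normB _ _) _; rewrite lerD2l.
exists d => y Dy; apply/ler_addgt0Pr => e e_gt0.
have [z z_gt] := g0_le_conjugate d e_gt0.
have := le_trans (psi_le _) (infconv_le (y + z) Dy).
have g0N : g0 (- z) = g0 z by rewrite /g0 normrN.
by rewrite psi_d (bfDl hbf) opprD addrA subrr add0r g0N; lra.
Qed.

End InfConvolution.

Lemma proper_convex_fineK {f : B -> \bar R} {b} :
  proper_convex f -> f b != +oo%E -> f b = (fine (f b))%:E.
Proof. by move=> [f_neqNy _ _] fb; rewrite fineK // fin_numE fb andbT. Qed.

Lemma ge_q_affine_minorant {f : B -> \bar R} c : proper_convex f ->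
  (forall b, ((q b)%:E <= f b)%E) ->
  exists d, forall b, ((bf b (d + c) - (bf c d + q c - g0 d))%:E <= f b)%E.
Proof.
move=> f_proper f_ge_q; have [_ [b1 fb1] f_convex] := f_proper.
pose D := [set y | f (y + c) != +oo%E].
pose F y := fine (f (y + c)) - bf y c - q c.
have Dfin y (Dy : D y) : f (y + c) = (fine (f (y + c)))%:E.
  exact: proper_convex_fineK.
have D1 : D (b1 - c) by rewrite /D /= subrK.
have F_convex x y l : D x -> D y -> 0 < l < 1 ->
    D (l *: x + (1 - l) *: y) /\ F (l *: x + (1 - l) *: y) <= l * F x + (1 - l) * F y.
  move=> Dx Dy l01; have := f_convex (x + c) (y + c) l l01.
  have -> : l *: (x + c) + (1 - l) *: (y + c) = l *: x + (1 - l) *: y + c.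
    by rewrite !scalerDr addrACA -scalerDl addrCA subrr addr0 scale1r.
  rewrite (Dfin _ Dx) (Dfin _ Dy) -!EFinM -EFinD => fm.
  have Dm : D (l *: x + (1 - l) *: y).
    by apply/negP => /eqP fm_oo; rewrite /= fm_oo leye_eq in fm.
  split=> //; move: fm; rewrite (Dfin _ Dm) lee_fin /F (bfDl hbf) !(bfZl hbf).
  lra.
have F_g0_ge0 y : D y -> 0 <= F y + g0 y.
  move=> Dy; have := f_ge_q (y + c); rewrite (Dfin _ Dy) lee_fin (qfD hbf).
  by have := neg_g0_le_q y; rewrite /F; lra.
have [d d_le] := exists_bf_g0_le D F D1 F_convex F_g0_ge0.
exists d => b; have [->|fb_fin] := eqVneq (f b) +oo%E; first exact: leey.
have Db : D (b - c) by rewrite /D /= subrK.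
have := d_le _ Db; rewrite /F subrK (proper_convex_fineK f_proper fb_fin) lee_fin.
by rewrite !(bfBl hbf) (bfDr hbf) /qf (bfC hbf c d); lra.
Qed.

Lemma BC_diff_is_all {f} : BC_function bf f -> diff_is_all (Pq bf f) (Nq bf (@g0 R B)).
Proof.
move=> [f_proper f_bds] c.
have [d d_min] := ge_q_affine_minorant c f_proper (fun b => (f_bds b).2).
set K := bf c d + q c - g0 d.
have fdc_le : (f (d + c)%R <= K%:E)%E.
  apply: le_trans (f_bds _).1 _; apply: ge_ereal_sup => _ [b _ <-].
  exact: lee_EFin_subr (d_min b).
have qdc : q (d + c) = q d + q c + bf c d by rewrite (qfD hbf) (bfC hbf d c).
have := le_trans (f_bds (d + c)).2 fdc_le; rewrite lee_fin qdc /K => qK.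
have Nd : g0 d = - q d by have := neg_g0_le_q d; lra.
exists (d + c), d; split=> //; last by rewrite addrAC subrr add0r.
apply/le_anti; rewrite (f_bds _).2 andbT; apply: le_trans fdc_le _.
by rewrite lee_fin qdc /K Nd; lra.
Qed.

Lemma BC_q_positive {f} : BC_function bf f -> q_positive bf (Pq bf f).
Proof.
move=> f_BC; split.
  by have [a [_ [Pa _ _]]] := BC_diff_is_all f_BC 0; exists a.
move=> b c Pb Pc; have [[_ _ f_convex] f_bds] := f_BC.
have := le_trans (f_bds _).2 (f_convex b c _ half_itv01).
rewrite subr_half Pb Pc -!EFinM -EFinD lee_fin (qfD hbf (2^-1 *: b)) !(qfZ hbf).
by rewrite (bfZl hbf) (bfZr hbf) (qfB hbf) expr2; lra.
Qed.

Lemma Pq_fat {f} : BC_function bf f -> Pq bf (fat bf f) = Pq bf f.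
Proof.
move=> [f_proper f_bds]; have [_ _ f_convex] := f_proper.
apply/seteqP; split=> b; rewrite /Pq /= => fb.
  by apply/le_anti; rewrite (f_bds b).2 andbT -fb; exact: (f_bds b).1.
apply/le_anti/andP; split; last by rewrite -fb; exact: (f_bds b).1.
apply: ge_ereal_sup => _ [c _ <-].
have [->|fc_fin] := eqVneq (f c) +oo%E; first by rewrite addeNy leNye.
rewrite (proper_convex_fineK f_proper fc_fin) -EFinB lee_fin.
apply: (@ler_subM01 _ _ _ (q c + q b - bf c b)) => t t01.
have := le_trans (f_bds _).2 (f_convex c b t t01).
rewrite fb (proper_convex_fineK f_proper fc_fin) -!EFinM -EFinD lee_fin.
rewrite (qfD hbf (t *: c)) !(qfZ hbf) (bfZl hbf) (bfZr hbf) => f_conv_tcb.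
have /andP[t_gt0 _] := t01.
by rewrite -(ler_pM2l t_gt0); rewrite !expr2 in f_conv_tcb; nra.
Qed.

Definition Phi (A : set B) b : \bar R := ereal_sup [set (bf a b - q a)%:E | a in A].

Lemma Phi_eq_q {A a} : q_positive bf A -> A a -> Phi A a = (q a)%:E.
Proof.
move=> [_ A_qpos] Aa; apply/le_anti/andP; split.
  apply: ge_ereal_sup => _ [a' Aa' <-]; rewrite lee_fin.
  by have := A_qpos _ _ Aa Aa'; rewrite (qfB hbf) (bfC hbf a' a); lra.
by apply: ereal_sup_ubound; exists a => //; rewrite /qf; congr EFin; lra.
Qed.

Lemma Phi_le_q_mem {A b} : max_q_positive bf A -> (Phi A b <= (q b)%:E)%E -> A b.
Proof.
move=> [A_qpos A_max] Phib_le; suff <- : A `|` [set b] = A by right.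
apply: A_max (@subsetUl _ A [set b]); apply: q_positive_setU1 => // a Aa.
have : ((bf a b - q a)%:E <= Phi A b)%E by apply: ereal_sup_ubound; exists a.
by move=> /le_trans /(_ Phib_le); rewrite lee_fin (qfB hbf) (bfC hbf a b); lra.
Qed.

Lemma Phi_ge_q A b : max_q_positive bf A -> ((q b)%:E <= Phi A b)%E.
Proof.
move=> A_max; rewrite leNgt; apply/negP => Phib_lt.
have Ab := Phi_le_q_mem A_max (ltW Phib_lt).
by rewrite Phi_eq_q ?ltxx // in Phib_lt; case: A_max.
Qed.

Lemma Phi_proper_convex A : q_positive bf A -> proper_convex (Phi A).
Proof.
move=> A_qpos; have [a0 Aa0] := A_qpos.1; split.
- move=> b; have : ((bf a0 b - q a0)%:E <= Phi A b)%E.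
    by apply: ereal_sup_ubound; exists a0.
  by case: (Phi A b).
- by exists a0; rewrite Phi_eq_q.
- move=> x y t /andP[t_gt0 t_lt1]; apply: ge_ereal_sup => _ [a Aa <-].
  have -> : (bf a (t *: x + (1 - t) *: y) - q a)%:E =
      (t%:E * (bf a x - q a)%:E + (1 - t)%:E * (bf a y - q a)%:E)%E.
    by rewrite -!EFinM -EFinD (bfDr hbf) !(bfZr hbf); congr EFin; ring.
  have a_le z : ((bf a z - q a)%:E <= Phi A z)%E.
    by apply: ereal_sup_ubound; exists a.
  apply: leeD; apply: lee_wpmul2l => //.
    by rewrite lee_fin ltW.
  by rewrite lee_fin subr_ge0 ltW.
Qed.

Lemma Phi_le_fat A b : q_positive bf A -> (Phi A b <= fat bf (Phi A) b)%E.
Proof.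
move=> A_qpos; apply: ge_ereal_sup => _ [a Aa <-]; apply: ereal_sup_ubound.
by exists a => //; rewrite Phi_eq_q.
Qed.

Lemma max_q_positive_diff_is_all A :
  max_q_positive bf A -> diff_is_all A (Nq bf (@g0 R B)).
Proof.
move=> A_max; have A_qpos := A_max.1.
have Phi_BC : BC_function bf (Phi A).
  split; first exact: Phi_proper_convex.
  by move=> b; split; [exact: Phi_le_fat | exact: Phi_ge_q].
move=> b; have [a [n [Pa Nn ->]]] := BC_diff_is_all Phi_BC b.
by exists a, n; split=> //; apply: (Phi_le_q_mem A_max); rewrite Pa.
Qed.

End SSDB.

Theorem theorem4p4 (R : realType) (B : completeNormedModType R)
    (bf : B -> B -> R) :
  SSDB bf ->
  [/\ (forall f : B -> \bar R, BC_function bf f ->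
         diff_is_all (Pq bf f) (Nq bf (@g0 R B))),
      (forall A : set B, q_positive bf A ->
         diff_is_all A (Nq bf (@g0 R B)) -> max_q_positive bf A),
      (forall f : B -> \bar R, BC_function bf f ->
         max_q_positive bf (Pq bf f) /\ Pq bf (fat bf f) = Pq bf f)
    & (forall A : set B, q_positive bf A ->
         (max_q_positive bf A <-> diff_is_all A (Nq bf (@g0 R B))))].
Proof.
move=> hS; have hbf := SSDB_symmetric_bilinear hS; split.
- by move=> f; exact: BC_diff_is_all.
- by move=> A; exact: diff_is_all_max_q_positive.
- move=> f f_BC; split; last exact: Pq_fat.
  exact: diff_is_all_max_q_positive (BC_q_positive hS f_BC) (BC_diff_is_all hS f_BC).
- move=> A A_qpos; split; first exact: max_q_positive_diff_is_all.
  exact: diff_is_all_max_q_positive.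
Qed.
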